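(* Let $q=(V_q,E_q,L_q)$ and $H=(V_H,E_H,L_H)$ be hypergraphs, fix an injection $pos:E_q\to\{0,1,\dots,|E_q|-1\}$, let $E'\subseteq E_q$, let $M:E'\to E_H$ be a partial embedding of the partial query $q'$ with hyperedge set $E'$, let $e\in E_q\setminus E'$ and $f\in E_H$, and put $M'=M\cup\{(e,f)\}$ (a map $E'\cup\{e\}\to E_H$). Suppose that for every integer $b$ whose binary representation has bit $pos(e)$ equal to $1$ and every label $l\in\Sigma$, $\mathcal{I}_q^{M'}(b,l)=\mathcal{I}_H^{M'}(b,l)$. Then $f$ is $M$-compatible for $e$, i.e., $M'$ is a partial embedding of the partial query with hyperedge set $E'\cup\{e\}$.
   Context: A (vertex-labeled) hypergraph is a triple $H=(V,E,L)$ where $V$ is a finite set, $E$ is a set of non-empty subsets of $V$ (hyperedges, no repeated hyperedges) with $\bigcup_{e\in E}e=V$, and $L:V\to\Sigma$ assigns each vertex a label. For $E'\subseteq E_q$ the partial query is $q'=(\bigcup_{e\in E'}e,E',L_q)$; a map $M:E'\to E_H$ is a partial embedding if there exists an injective label-preserving $\phi:\bigcup_{e\in E'}e\to V_H$ with $\{\phi(u):u\in e\}=M(e)$ for all $e\in E'$. For $F=E'\cup\{e\}$ and $M'$ as in the claim, the incident hyperedge bitmaps are $b_q^{M'}(u)=\sum_{g\in F,\,u\in g}2^{pos(g)}$ for $u\in\bigcup_{g\in F}g$, and $b_H^{M'}(v)=\sum_{g\in F,\,v\in M'(g)}2^{pos(g)}$ for $v\in\bigcup_{g\in F}M'(g)$.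 The cell signatures are $\mathcal{I}_q^{M'}(b,l)=|\{u\in\bigcup_{g\in F}g : b_q^{M'}(u)=b,\ L_q(u)=l\}|$ and $\mathcal{I}_H^{M'}(b,l)=|\{v\in\bigcup_{g\in F}M'(g) : b_H^{M'}(v)=b,\ L_H(v)=l\}|$. A data hyperedge $f$ is $M$-compatible for an unmapped query hyperedge $e$ if $M\cup\{(e,f)\}$ is a partial embedding for the partial query with hyperedge set $E'\cup\{e\}$. *)

From HB Require Import structures.
From mathcomp Require Import all_boot.
Set Implicit Arguments. Unset Strict Implicit. Unset Printing Implicit Defensive.

(* A vertex-labeled hypergraph over a finite vertex type with labels in Sigma.
   Hyperedges are a set of vertex sets (so no repeated hyperedges). *)
Record hypergraph (Sigma : eqType) := Hypergraph {
  hV : finType;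
  hE : {set {set hV}};
  hL : hV -> Sigma }.
Arguments hV {Sigma} h.
Arguments hE {Sigma} h.
Arguments hL {Sigma} h _.

Definition wf_hypergraph (Sigma : eqType) (H : hypergraph Sigma) : Prop :=
  (forall e, e \in hE H -> e != set0) /\ cover (hE H) = [set: hV H].

Definition partial_embedding (Sigma : eqType) (q H : hypergraph Sigma)
  (E' : {set {set hV q}}) (M : {set hV q} -> {set hV H}) : Prop :=
  (forall g, g \in E' -> M g \in hE H) /\
  exists phi : hV q -> hV H,
    {in cover E' &, injective phi} /\
    (forall u, u \in cover E' -> hL H (phi u) = hL q u) /\
    (forall g, g \in E' -> [set phi u | u in g] = M g).

Arguments partial_embedding {Sigma} q H E' M.

Definition bit (b i : nat) : bool := odd (b %/ 2 ^ i).

Definition bitmap_q (Sigma : eqType) (q : hypergraph Sigma)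
  (pos : {set hV q} -> nat) (F : {set {set hV q}}) (u : hV q) : nat :=
  \sum_(g in F | u \in g) 2 ^ pos g.

Definition bitmap_H (Sigma : eqType) (q H : hypergraph Sigma)
  (pos : {set hV q} -> nat) (F : {set {set hV q}})
  (M' : {set hV q} -> {set hV H}) (v : hV H) : nat :=
  \sum_(g in F | v \in M' g) 2 ^ pos g.

Definition cell_q (Sigma : eqType) (q : hypergraph Sigma)
  (pos : {set hV q} -> nat) (F : {set {set hV q}}) (b : nat) (l : Sigma) : nat :=
  #|[set u in cover F | (bitmap_q pos F u == b) && (hL q u == l)]|.

Definition cell_H (Sigma : eqType) (q H : hypergraph Sigma)
  (pos : {set hV q} -> nat) (F : {set {set hV q}})
  (M' : {set hV q} -> {set hV H}) (b : nat) (l : Sigma) : nat :=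
  #|[set v in \bigcup_(g in F) M' g |
       (bitmap_H pos F M' v == b) && (hL H v == l)]|.

Definition extend_map (Sigma : eqType) (q H : hypergraph Sigma)
  (M : {set hV q} -> {set hV H}) (e : {set hV q}) (f : {set hV H}) :
  {set hV q} -> {set hV H} :=
  fun g => if g == e then f else M g.

From mathcomp Require Import all_boot.

(* Since pos is injective, a bitmap is the binary code of the set of
   hyperedges incident to a vertex.  The hypothesis therefore says that, for
   every set S of hyperedges of E' ∪ {e} containing e, the query and the data
   graph have equally many vertices of each label lying in exactly the
   hyperedges of S (for the data graph, in their images under M').  The
   embedding of E' gives the same equality over E'; since every E'-class
   splits into the classes S and S ∪ {e} over E' ∪ {e}, subtraction yields it
   for the classes avoiding e too.  Matching each query class bijectively with
   its data class gives the required injection. *)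

Lemma sum_pow2_pred1 (s : seq nat) k : uniq s ->
  \sum_(i <- s | i == k) 2 ^ i = (k \in s) * 2 ^ k.
Proof.
move=> s_uniq; rewrite (eq_bigr (fun=> 2 ^ k)); last by move=> i /eqP->.
rewrite -(count_uniq_mem k s_uniq) -sum1_count big_distrl /=.
by apply: eq_bigr => i _; rewrite mul1n.
Qed.

Lemma sum_pow2_lt (s : seq nat) k : uniq s -> \sum_(i <- s | i < k) 2 ^ i < 2 ^ k.
Proof.
move=> s_uniq; elim: k => [|k IHk]; first by rewrite big_pred0.
rewrite (bigID (fun i => i < k)) /=.
have -> : \sum_(i <- s | (i < k.+1) && (i < k)) 2 ^ i = \sum_(i <- s | i < k) 2 ^ i.
  by apply: eq_bigl => i; case: (ltnP i k) => [/ltnW|]; rewrite ?andbT ?andbF // ltnS.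
have -> : \sum_(i <- s | (i < k.+1) && ~~ (i < k)) 2 ^ i = \sum_(i <- s | i == k) 2 ^ i.
  by apply: eq_bigl => i; rewrite ltnS eqn_leq; case: ltnP.
rewrite sum_pow2_pred1 // expnS mul2n -addnn.
rewrite -addSn leq_add //; by case: (k \in s); rewrite ?mul1n ?mul0n.
Qed.

(* Bits below k are too small to matter, bits above k are multiples of 2^(k+1). *)
Lemma bit_sum_pow2 (s : seq nat) k : uniq s -> bit (\sum_(i <- s) 2 ^ i) k = (k \in s).
Proof.
move=> s_uniq; rewrite /bit (bigID (fun i => i < k)) /=.
have -> : \sum_(i <- s | ~~ (i < k)) 2 ^ i =
          \sum_(i <- s | i == k) 2 ^ i + \sum_(i <- s | k < i) 2 ^ i.
  rewrite (bigID (fun i => i == k)) /=; congr (_ + _); apply: eq_bigl => i.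
    by case: (eqVneq i k) => [->|]; rewrite ?ltnn ?andbF.
  by rewrite -leqNgt ltn_neqAle eq_sym andbC.
have /dvdnP[m ->] : 2 ^ k.+1 %| \sum_(i <- s | k < i) 2 ^ i.
  by apply: dvdn_sum => i; apply: dvdn_exp2l.
rewrite sum_pow2_pred1 // expnS mulnA -mulnDl addnC.
rewrite divnMDl ?expn_gt0 // (divn_small (sum_pow2_lt s k s_uniq)) addn0.
by rewrite oddD oddM andbF addbF; case: (k \in s).
Qed.

Definition code {T : finType} (pos : T -> nat) (S : {set T}) : nat :=
  \sum_(g in S) 2 ^ pos g.

Section Code.

Context {T : finType} {pos : T -> nat} {D : {set T}}.
Hypothesis pos_inj : {in D &, injective pos}.
Implicit Types S : {set T}.

Lemma bit_code {S x} : S \subset D -> x \in D -> bit (code pos S) (pos x) = (x \in S).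
Proof.
move=> sSD xD; have sub : {subset enum S <= D}.
  by move=> g; rewrite mem_enum; apply: (subsetP sSD).
rewrite /code -big_enum -(big_map pos predT (fun i => 2 ^ i)) bit_sum_pow2; last first.
  by rewrite (map_inj_in_uniq (sub_in2 sub pos_inj)) enum_uniq.
apply/mapP/idP => [[g gS /pos_inj ->] //|xS]; last by exists x; rewrite ?mem_enum.
- by rewrite -mem_enum.
- exact: sub.
Qed.

Lemma eq_code S S' : S \subset D -> S' \subset D -> (code pos S == code pos S') = (S == S').
Proof.
move=> sSD sS'D; apply/eqP/eqP => [codeE|-> //]; apply/setP => x.
have [xD|xND] := boolP (x \in D); first by rewrite -(bit_code sSD xD) -(bit_code sS'D xD) codeE.
by apply/idP/idP => [/(subsetP sSD)|/(subsetP sS'D)]; rewrite (negbTE xND).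
Qed.

End Code.

Definition incident {T W : finType} (F : {set T}) (N : T -> {set W}) (w : W) : {set T} :=
  [set g in F | w \in N g].

(* The paper's cell (b, l), with the bitmap b replaced by the incidence set it encodes. *)
Definition cell {T W : finType} {Sigma : eqType} (F : {set T}) (N : T -> {set W})
  (lab : W -> Sigma) (S : {set T}) (l : Sigma) : {set W} :=
  [set w | (incident F N w == S) && (lab w == l)].

Section Cells.

Context {T W : finType} {Sigma : eqType} {N : T -> {set W}} {lab : W -> Sigma}.
Implicit Types (F S : {set T}) (l : Sigma).

Lemma incident_sub F w : incident F N w \subset F.
Proof. by apply/subsetP => g; rewrite inE => /andP[]. Qed.

Lemma mem_bigcup_incident F w : (w \in \bigcup_(g in F) N g) = (incident F N w != set0).
Proof.
apply/bigcupP/set0Pn => [[g gF wg]|[g]]; first by exists g; rewrite inE gF.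
by rewrite inE => /andP[gF wg]; exists g.
Qed.

Lemma cell_bigcup F S l : S != set0 ->
  [set w in \bigcup_(g in F) N g | (incident F N w == S) && (lab w == l)] = cell F N lab S l.
Proof.
move=> S0; apply/setP => w; rewrite !inE mem_bigcup_incident.
by case: (incident F N w =P S) => [->|_]; rewrite ?S0 ?andbF.
Qed.

Lemma cell_eq0 F S l : ~~ (S \subset F) -> cell F N lab S l = set0.
Proof.
move=> nsSF; apply/setP => w; rewrite !inE; case: (incident F N w =P S) => // incE.
by move: nsSF; rewrite -incE incident_sub.
Qed.

Lemma incident_setU1 F e w :
  incident (F :|: [set e]) N w = if w \in N e then e |: incident F N w else incident F N w.
Proof.
case: ifP => wNe; apply/setP => g; rewrite !inE;
  by case: (eqVneq g e) => [->|_]; rewrite ?orbT ?orbF ?wNe ?andbF.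
Qed.

Lemma card_cell_setU1 F e S l : e \notin F -> e \notin S ->
  #|cell F N lab S l| =
  #|cell (F :|: [set e]) N lab S l| + #|cell (F :|: [set e]) N lab (e |: S) l|.
Proof.
move=> eNF eNS; have eNinc w : e \notin incident F N w by rewrite inE (negbTE eNF).
rewrite -(cardsID (N e)) addnC /cell; congr (_ + _); apply: eq_card => w;
  rewrite !inE incident_setU1; case: (w \in N e) => /=.
- by apply/esym/andP => -[/eqP incE _]; rewrite -incE setU11 in eNS.
- by [].
- rewrite andbT; congr (_ && _); apply/eqP/eqP => [-> //|incE]; apply/setP => g.
  have := congr1 (fun X : {set T} => g \in X) incE; rewrite !inE.
  by case: (eqVneq g e) => [->|_] /=; rewrite ?(negbTE eNF) ?(negbTE eNS).
- by rewrite andbF; apply/esym/andP => -[/eqP incE _]; move: (eNinc w); rewrite incE setU11.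
Qed.

Lemma card_cell_bitmap {pos : T -> nat} {D F S : {set T}} {l} :
  {in D &, injective pos} -> F \subset D -> S \subset D -> S != set0 ->
  #|[set w in \bigcup_(g in F) N g |
       (\sum_(g in F | w \in N g) 2 ^ pos g == code pos S) && (lab w == l)]| =
  #|cell F N lab S l|.
Proof.
move=> pos_inj sFD sSD S0; rewrite -cell_bigcup //; apply: eq_card => w; rewrite !inE.
have -> : \sum_(g in F | w \in N g) 2 ^ pos g = code pos (incident F N w).
  by apply: eq_bigl => g; rewrite inE.
by rewrite (eq_code pos_inj) // (subset_trans (incident_sub F w)).
Qed.

End Cells.

Lemma card_cell_setU1_eq {T U V : finType} {Sigma : eqType} {E : {set T}} {e : T}
    {NU : T -> {set U}} {NV : T -> {set V}} {labU : U -> Sigma} {labV : V -> Sigma} :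
  e \notin E ->
  (forall (S : {set T}) (l : Sigma), e \in S ->
     #|cell (E :|: [set e]) NU labU S l| = #|cell (E :|: [set e]) NV labV S l|) ->
  (forall (S : {set T}) (l : Sigma), S != set0 ->
     #|cell E NU labU S l| = #|cell E NV labV S l|) ->
  forall (S : {set T}) (l : Sigma), S != set0 ->
    #|cell (E :|: [set e]) NU labU S l| = #|cell (E :|: [set e]) NV labV S l|.
Proof.
move=> eNE card_e card_E S l S0; have [eS|eNS] := boolP (e \in S); first exact: card_e.
apply/eqP; rewrite -(eqn_add2r #|cell (E :|: [set e]) NU labU (e |: S) l|).
by rewrite {2}(card_e (e |: S) l (setU11 e S)) -!card_cell_setU1 // card_E.
Qed.

Section Matching.

Context {T U V : finType} {Sigma : eqType} {F : {set T}}.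
Context {NU : T -> {set U}} {NV : T -> {set V}} {labU : U -> Sigma} {labV : V -> Sigma}.

Let dom := \bigcup_(g in F) NU g.

Lemma card_cell_eq_of_matching {phi : U -> V} :
  {in dom &, injective phi} -> {in dom, forall u, labV (phi u) = labU u} ->
  (forall g, g \in F -> phi @: NU g = NV g) ->
  forall (S : {set T}) (l : Sigma), S != set0 ->
    #|cell F NU labU S l| = #|cell F NV labV S l|.
Proof.
move=> phi_inj phi_lab phi_img S l S0.
have mem_dom u g : g \in F -> u \in NU g -> u \in dom by move=> gF ug; apply/bigcupP; exists g.
have phi_mem u g : u \in dom -> g \in F -> (phi u \in NV g) = (u \in NU g).
  move=> u_dom gF; rewrite -phi_img //; apply/imsetP/idP => [[w wg]|ug]; last by exists u.
  by move/phi_inj => -> //; apply: mem_dom wg.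
have incident_phi u : u \in dom -> incident F NV (phi u) = incident F NU u.
  move=> u_dom; apply/setP => g; rewrite !inE.
  by case: (boolP (g \in F)) => //= gF; apply: phi_mem.
have cell_dom : {subset cell F NU labU S l <= dom}.
  by move=> u; rewrite inE mem_bigcup_incident => /andP[/eqP-> _].
rewrite -(card_in_imset (sub_in2 cell_dom phi_inj)); apply: eq_card => v.
apply/imsetP/idP => [[u u_cell ->]|].
  by move: u_cell (cell_dom u u_cell); rewrite !inE => + u_dom; rewrite incident_phi // phi_lab.
rewrite inE => /andP[/eqP vS /eqP vl]; have [g gS] := set0Pn _ S0.
move: gS; rewrite -vS inE => /andP[gF]; rewrite -phi_img // => /imsetP[u ug vE].
have u_dom := mem_dom u g gF ug.
by exists u; rewrite // inE -incident_phi // -phi_lab // -vE vS vl !eqxx.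
Qed.

Hypothesis card_cell : forall (S : {set T}) (l : Sigma), S != set0 ->
  #|cell F NU labU S l| = #|cell F NV labV S l|.
Variable v0 : V.

Let cellU u := cell F NU labU (incident F NU u) (labU u).
Let cellV u := cell F NV labV (incident F NU u) (labU u).

Let psi u := nth v0 (enum (cellV u)) (index u (enum (cellU u))).

Let mem_cellU u : u \in cellU u.
Proof. by rewrite inE !eqxx. Qed.

Let cellU_eq {u w} : w \in cellU u -> cellU w = cellU u /\ cellV w = cellV u.
Proof. by rewrite inE => /andP[/eqP incE /eqP labE]; rewrite /cellU /cellV incE labE. Qed.

Let cellU_dom {u w} : u \in dom -> w \in cellU u -> w \in dom.
Proof. by rewrite !mem_bigcup_incident inE => + /andP[/eqP->]. Qed.

Let index_lt {u w} : u \in dom -> w \in cellU u ->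
  index w (enum (cellU u)) < size (enum (cellV u)).
Proof.
move=> u_dom wU; rewrite -cardE -card_cell -?mem_bigcup_incident //.
by rewrite cardE index_mem mem_enum.
Qed.

Let psi_cellV {u} : u \in dom -> psi u \in cellV u.
Proof. by move=> u_dom; rewrite -mem_enum; apply/mem_nth/index_lt. Qed.

Let psi_incident {u} : u \in dom ->
  incident F NV (psi u) = incident F NU u /\ labV (psi u) = labU u.
Proof. by move/psi_cellV; rewrite inE => /andP[/eqP-> /eqP->]. Qed.

Let psi_inj : {in dom &, injective psi}.
Proof.
move=> u w u_dom w_dom psiE.
have [incU labU_u] := psi_incident u_dom; have [incW labU_w] := psi_incident w_dom.
have wU : w \in cellU u by rewrite inE -incU -labU_u psiE incW labU_w !eqxx.
have [cellUE cellVE] := cellU_eq wU.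
move: psiE; rewrite /psi cellUE cellVE => /eqP.
rewrite nth_uniq ?enum_uniq ?index_lt // => /eqP.
by apply: (index_inj u); rewrite mem_enum ?mem_cellU.
Qed.

Let psi_cell_onto {u} : u \in dom -> psi @: cellU u = cellV u.
Proof.
move=> u_dom; apply/eqP; rewrite eqEcard card_in_imset; last first.
  by apply: sub_in2 psi_inj => w; apply: cellU_dom.
rewrite card_cell -?mem_bigcup_incident // leqnn andbT.
apply/subsetP => _ /imsetP[w wU ->]; have [_ <-] := cellU_eq wU.
exact/psi_cellV/(cellU_dom u_dom).
Qed.

Let psi_img g : g \in F -> psi @: NU g = NV g.
Proof.
move=> gF; apply/setP => v; apply/imsetP/idP => [[u ug ->]|vg].
  have u_dom : u \in dom by apply/bigcupP; exists g.
  have [incE _] := psi_incident u_dom.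
  have : g \in incident F NU u by rewrite inE gF.
  by rewrite -incE inE => /andP[].
have v_inc : incident F NV v != set0 by apply/set0Pn; exists g; rewrite inE gF.
have /card_gt0P[u0] : 0 < #|cell F NU labU (incident F NV v) (labV v)|.
  by rewrite card_cell //; apply/card_gt0P; exists v; rewrite inE !eqxx.
rewrite inE => /andP[/eqP inc0 /eqP lab0].
have u0_dom : u0 \in dom by rewrite mem_bigcup_incident inc0.
have : v \in cellV u0 by rewrite inE inc0 lab0 !eqxx.
rewrite -psi_cell_onto // => /imsetP[u uU ->]; exists u => //.
move: uU; rewrite inE => /andP[/eqP incE _].
have : g \in incident F NV v by rewrite inE gF.
by rewrite -inc0 -incE inE => /andP[].
Qed.

Lemma matching_of_card_cell_eq : exists psi : U -> V,
  [/\ {in dom &, injective psi}, {in dom, forall u, labV (psi u) = labU u}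
    & forall g, g \in F -> psi @: NU g = NV g].
Proof.
exists psi; split; [exact: psi_inj | | exact: psi_img].
by move=> u /psi_incident[].
Qed.

End Matching.

Theorem theorem4 (Sigma : eqType) (q H : hypergraph Sigma)
  (pos : {set hV q} -> nat)
  (E' : {set {set hV q}}) (M : {set hV q} -> {set hV H})
  (e : {set hV q}) (f : {set hV H}) :
  wf_hypergraph q -> wf_hypergraph H ->
  {in hE q &, injective pos} ->
  (forall g, g \in hE q -> pos g < #|hE q|) ->
  E' \subset hE q ->
  partial_embedding q H E' M ->
  e \in hE q -> e \notin E' ->
  f \in hE H ->
  (forall (b : nat) (l : Sigma), bit b (pos e) ->
     cell_q pos (E' :|: [set e]) b l =
     cell_H pos (E' :|: [set e]) (extend_map M e f) b l) ->
  partial_embedding q H (E' :|: [set e]) (extend_map M e f).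
Proof.
move=> _ [H_nonempty _] pos_inj _ sE'q [ME' [phi [phi_inj [phi_lab phi_img]]]] eEq eNE' fH cells.
set F := E' :|: [set e]; set M' := extend_map M e f.
have M'E g : g \in E' -> M' g = M g.
  by rewrite /M' /extend_map; case: eqVneq => // -> /(negP eNE').
have sFq : F \subset hE q by rewrite subUset sE'q sub1set.
have card_e (S : {set {set hV q}}) (l : Sigma) :
    e \in S -> #|cell F id (hL q) S l| = #|cell F M' (hL H) S l|.
  move=> eS; have [sSF|nsSF] := boolP (S \subset F); last by rewrite !cell_eq0 ?cards0.
  have sSq := subset_trans sSF sFq; have S0 : S != set0 by apply/set0Pn; exists e.
  have := cells (code pos S) l; rewrite (bit_code pos_inj sSq eEq) => /(_ eS).
  rewrite /cell_q /cell_H /cover (card_cell_bitmap (N := id) pos_inj sFq sSq S0).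
  by rewrite (card_cell_bitmap pos_inj sFq sSq S0).
have card_E' : forall (S : {set {set hV q}}) (l : Sigma), S != set0 ->
    #|cell E' id (hL q) S l| = #|cell E' M' (hL H) S l|.
  by apply: (card_cell_eq_of_matching phi_inj phi_lab) => g gE'; rewrite M'E ?phi_img.
have [v0 _] := set0Pn _ (H_nonempty f fH).
have [psi [psi_inj psi_lab psi_img]] :=
  matching_of_card_cell_eq (card_cell_setU1_eq eNE' card_e card_E') v0.
split; last by exists psi.
move=> g; rewrite !inE => /orP[gE'|/eqP->]; first by rewrite M'E ?ME'.
by rewrite /M' /extend_map eqxx.
Qed.
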